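(* Let $k,\ell$ be positive integers, $e=(1,\dots,1)^\top\in\mathbb R^k$, and $(\Omega,\mathcal F,\mathcal P)$ a probability space. Let $A(\omega)\in\mathbb R^{k\times k}$, $B(\omega)\in\mathbb R^{k\times\ell}$, $C(\omega)\in\mathbb R^{\ell\times k}$, $D(\omega)\in\mathbb R^{\ell\times\ell}$, $p(\omega)\in\mathbb R^k$, $q(\omega)\in\mathbb R^\ell$ depend measurably on $\omega\in\Omega$, and set $F(x,u,\omega)=\big(A(\omega)x+B(\omega)u+p(\omega),\ C(\omega)x+D(\omega)u+q(\omega)\big)$. Define $$\widetilde F_1(x,u,t,\omega)=A(\omega)(x+te)+B(\omega)u+p(\omega)\in\mathbb R^k,$$ $$\widetilde F_2(x,u,t,\omega)=\begin{pmatrix}[tC(\omega)+ue^\top A(\omega)](x+te)+ue^\top[B(\omega)u+p(\omega)]+t[D(\omega)u+q(\omega)]\\ t^2-\|u\|^2\end{pmatrix}\in\mathbb R^{\ell+1}.$$ Let $x\in\mathbb R^k$, $u\in\mathbb R^\ell$, $z=(x,u)$, and suppose $u\ne0$ and $C(\omega)x+D(\omega)u+q(\omega)\neq0$. Then $z$ is a solution of the stochastic linear complementarity problem on $L(k,\ell)$, i.e. almost surely in $\omega$, $$(x,u)\in L(k,\ell),\quad F(x,u,\omega)\in M(k,\ell),\quad \langle (x,u),F(x,u,\omega)\rangle=0,$$ if and only if there exists $t>0$ such that $\tilde z:=(x-te,u,t)\in\mathbb R^{k+\ell+1}$ is a solution of the stochastic mixed complementarity problem, i.e., writing $\tilde x=x-te$,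 almost surely in $\omega$, $$\widetilde F_2(\tilde x,u,t,\omega)=0,\quad \tilde x\ge0,\quad \widetilde F_1(\tilde x,u,t,\omega)\ge0,\quad \tilde x^\top\widetilde F_1(\tilde x,u,t,\omega)=0.$$
   Context: $\|\cdot\|$ is the Euclidean norm and $\langle\cdot,\cdot\rangle$ the standard inner product on $\mathbb R^k\times\mathbb R^\ell$. The extended second order cone is $L(k,\ell)=\{(x,u)\in\mathbb R^k\times\mathbb R^\ell: x\ge\|u\|e\}$ (componentwise inequality) and its dual is $M(k,\ell)=\{(x,u)\in\mathbb R^k\times\mathbb R^\ell: e^\top x\ge\|u\|,\ x\ge0\}$. *)

From HB Require Import structures.
From mathcomp Require Import all_boot all_order all_algebra.
From mathcomp Require Import all_classical all_reals all_analysis.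
Set Implicit Arguments. Unset Strict Implicit. Unset Printing Implicit Defensive.
Import Order.TTheory GRing.Theory Num.Theory.
Local Open Scope ring_scope.

Section SLCP.
Variable R : realType.

Definition enorm n (v : 'cV[R]_n) : R := Num.sqrt (\sum_i (v i 0) ^+ 2).

Definition evec k : 'cV[R]_k := const_mx 1.

Definition ip k l (x : 'cV[R]_k) (u : 'cV[R]_l) (y : 'cV[R]_k) (v : 'cV[R]_l) : R :=
  \sum_i x i 0 * y i 0 + \sum_j u j 0 * v j 0.

(* extended second order cone L(k,l) = {(x,u) : x >= ||u|| e} *)
Definition inL k l (x : 'cV[R]_k) (u : 'cV[R]_l) : Prop :=
  forall i, enorm u <= x i 0.

(* its dual M(k,l) = {(x,u) : e^T x >= ||u||, x >= 0} *)
Definition inM k l (x : 'cV[R]_k) (u : 'cV[R]_l) : Prop :=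
  enorm u <= \sum_i x i 0 /\ forall i, 0 <= x i 0.

Definition F1 k l (A : 'M[R]_k) (B : 'M[R]_(k,l)) (p : 'cV[R]_k)
  (x : 'cV[R]_k) (u : 'cV[R]_l) : 'cV[R]_k := A *m x + B *m u + p.
Definition F2 k l (C : 'M[R]_(l,k)) (D : 'M[R]_l) (q : 'cV[R]_l)
  (x : 'cV[R]_k) (u : 'cV[R]_l) : 'cV[R]_l := C *m x + D *m u + q.

Definition Ft1 k l (A : 'M[R]_k) (B : 'M[R]_(k,l)) (p : 'cV[R]_k)
  (x : 'cV[R]_k) (u : 'cV[R]_l) (t : R) : 'cV[R]_k :=
  A *m (x + t *: evec k) + B *m u + p.

Definition Ft2 k l (A : 'M[R]_k) (B : 'M[R]_(k,l)) (C : 'M[R]_(l,k)) (D : 'M[R]_l)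
  (p : 'cV[R]_k) (q : 'cV[R]_l) (x : 'cV[R]_k) (u : 'cV[R]_l) (t : R)
  : 'cV[R]_(l + 1) :=
  col_mx
    ((t *: C + u *m ((evec k)^T *m A)) *m (x + t *: evec k)
       + u *m ((evec k)^T *m (B *m u + p)) + t *: (D *m u + q))
    ((t ^+ 2 - enorm u ^+ 2)%:M).

End SLCP.

From HB Require Import structures.
From mathcomp Require Import all_boot all_order all_algebra.
From mathcomp Require Import all_classical all_reals all_analysis.
From mathcomp Require Import lra ring.
Import Order.TTheory GRing.Theory Num.Theory.
Local Open Scope ring_scope.

Set Implicit Arguments. Unset Strict Implicit.

(* The equivalence holds for each omega separately.  Writing y = F1, v = F2,
   s = e^T y and n = ||u|| > 0, complementarity on L x M forces
   <x, y> >= n s >= n ||v|| >= -<u, v> = <x, y>, so all these inequalities are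
   equalities: (x_i - n) y_i = 0, ||v|| = s, and v = -(s/n) u, i.e.
   n v + s u = 0.  With t = n these are exactly the equations of the mixed
   problem at x - t e, whose last component t^2 = ||u||^2 conversely pins the
   positive t down to ||u||. *)

Section ConeComplementarity.
Variable R : realType.

Lemma scalar_mx11_eq0 (a : R) : (a%:M == 0 :> 'M[R]_1) = (a == 0).
Proof. by rewrite -scalemx1 scalemx_eq0 (negPf (matrix_nonzero1 _ 0)) orbF. Qed.

Lemma cV_eq0 n (v : 'cV[R]_n) : v = 0 <-> forall j, v j 0 = 0.
Proof.
split=> [-> j|v0]; first by rewrite mxE.
by apply/matrixP => i j; rewrite ord1 v0 mxE.
Qed.

Lemma sqr_enorm n (u : 'cV[R]_n) : enorm u ^+ 2 = \sum_i u i 0 ^+ 2.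
Proof. by rewrite /enorm sqr_sqrtr // sumr_ge0 // => i _; rewrite sqr_ge0. Qed.

Lemma enorm_ge0 n (u : 'cV[R]_n) : 0 <= enorm u.
Proof. exact: sqrtr_ge0. Qed.

Lemma sum_sqr_eq0 n (f : 'I_n -> R) : \sum_i f i ^+ 2 <= 0 -> forall i, f i = 0.
Proof.
move=> le0 i; apply/eqP; rewrite -sqrf_eq0.
have /psumr_eq0P sum0 : \sum_i f i ^+ 2 = 0.
  by apply/le_anti; rewrite le0 sumr_ge0 // => j _; rewrite sqr_ge0.
by rewrite sum0 // => j _; rewrite sqr_ge0.
Qed.

Lemma enorm_gt0 n (u : 'cV[R]_n) : u != 0 -> 0 < enorm u.
Proof.
move=> u_neq0; rewrite lt_neqAle enorm_ge0 andbT; apply: contra u_neq0 => /eqP n0.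
apply/eqP/matrixP => i j; rewrite ord1 mxE.
apply: (@sum_sqr_eq0 _ (fun i => u i 0)).
by rewrite -sqr_enorm -n0 expr0n.
Qed.

Lemma sum_subr_mull n (x y : 'cV[R]_n) c :
  \sum_i (x i 0 - c) * y i 0 = \sum_i x i 0 * y i 0 - c * \sum_i y i 0.
Proof. by rewrite mulr_sumr -sumrB; apply: eq_bigr => i _; ring. Qed.

Lemma sum_sqr_comb n (u v : 'cV[R]_n) a b :
  \sum_j (a * v j 0 + b * u j 0) ^+ 2 =
  a ^+ 2 * enorm v ^+ 2 + 2 * a * b * \sum_j u j 0 * v j 0
  + b ^+ 2 * enorm u ^+ 2.
Proof.
by rewrite !sqr_enorm !mulr_sumr -!big_split; apply: eq_bigr => j _ /=; ring.
Qed.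

Section Collinear.
Variables (n : nat) (u v : 'cV[R]_n) (a b : R).
Hypothesis comb0 : forall j, a * v j 0 + b * u j 0 = 0.

Let av j : a * v j 0 = - (b * u j 0).
Proof. by apply/eqP; rewrite -subr_eq0 opprK comb0. Qed.

Lemma collinear_dot : a * \sum_j u j 0 * v j 0 = - b * enorm u ^+ 2.
Proof.
rewrite sqr_enorm !mulr_sumr; apply: eq_bigr => j _.
by rewrite mulrCA av; ring.
Qed.

Lemma collinear_enorm : a ^+ 2 * enorm v ^+ 2 = b ^+ 2 * enorm u ^+ 2.
Proof.
rewrite !sqr_enorm !mulr_sumr; apply: eq_bigr => j _.
by rewrite -exprMn av; ring.
Qed.

End Collinear.

Definition cone_compl k l (x y : 'cV[R]_k) (u v : 'cV[R]_l) : Prop :=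
  inL x u /\ inM y v /\ ip x u y v = 0.

(* The mixed problem at (x - t e, u, t) for y = F1, v = F2; see [mixed_problemE]. *)
Definition mixed_compl k l (x y : 'cV[R]_k) (u v : 'cV[R]_l) (t : R) : Prop :=
  [/\ forall j, t * v j 0 + (\sum_i y i 0) * u j 0 = 0,
      t ^+ 2 = enorm u ^+ 2,
      forall i, t <= x i 0,
      forall i, 0 <= y i 0
    & \sum_i (x i 0 - t) * y i 0 = 0].

Lemma mixed_compl_enorm k l (x y : 'cV[R]_k) (u v : 'cV[R]_l) t :
  0 < t -> mixed_compl x y u v t -> t = enorm u.
Proof.
move=> t_gt0 [_ t2 _ _ _]; apply/eqP.
by rewrite -(@eqrXn2 _ 2) ?t2 ?enorm_ge0 ?ltW.
Qed.

Lemma cone_compl_mixed k l (x y : 'cV[R]_k) (u v : 'cV[R]_l) :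
  u != 0 -> cone_compl x y u v -> mixed_compl x y u v (enorm u).
Proof.
move=> u_neq0 [xL [[vs y_ge0] xyuv0]].
have n_gt0 := enorm_gt0 u_neq0; have v_ge0 := enorm_ge0 v.
move: vs xyuv0; rewrite /ip.
set n := enorm u; set s := \sum_i y i 0; set a := \sum_j u j 0 * v j 0.
set X := \sum_i x i 0 * y i 0 => vs xyuv0.
have s_ge0 : 0 <= s by apply: sumr_ge0.
have nsX : n * s <= X.
  rewrite -subr_ge0 -sum_subr_mull; apply: sumr_ge0 => i _.
  by rewrite mulr_ge0 // subr_ge0.
have a_le : a <= - (n * s) by lra.
(* ||n v + s u||^2 = n^2 ||v||^2 + 2 n s <u, v> + n^2 s^2 <= 0 *)
have comb0 : forall j, n * v j 0 + s * u j 0 = 0.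
  apply: sum_sqr_eq0; rewrite sum_sqr_comb -/a -/n.
  have ns_ge0 : 0 <= n * s by rewrite mulr_ge0 // ltW.
  have dot_le : 2 * n * s * a <= - 2 * (n * s) ^+ 2 by nra.
  have v2_le : enorm v ^+ 2 <= s ^+ 2 by nra.
  nra.
have a_eq : a = - s * n.
  by apply: (mulfI (lt0r_neq0 n_gt0)); rewrite (collinear_dot comb0) -/n; ring.
by split=> //; rewrite sum_subr_mull -/X -/s; lra.
Qed.

Lemma mixed_compl_cone k l (x y : 'cV[R]_k) (u v : 'cV[R]_l) t :
  0 < t -> mixed_compl x y u v t -> cone_compl x y u v.
Proof.
move=> t_gt0 mixed; have tE := mixed_compl_enorm t_gt0 mixed; subst t.
case: mixed => comb0 _ xL y_ge0; rewrite sum_subr_mull => xy.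
set n := enorm u in t_gt0 comb0 xL xy *.
set s := \sum_i y i 0 in comb0 xy *.
have s_ge0 : 0 <= s by apply: sumr_ge0.
have vs : enorm v = s.
  apply/eqP; rewrite -(@eqrXn2 _ 2) ?enorm_ge0 //.
  rewrite -(inj_eq (mulfI (lt0r_neq0 (exprn_gt0 2 t_gt0)))).
  by rewrite (collinear_enorm comb0) mulrC.
have a_eq : \sum_j u j 0 * v j 0 = - s * n.
  by apply: (mulfI (lt0r_neq0 t_gt0)); rewrite (collinear_dot comb0) -/n; ring.
split=> //; split; first by split=> //; rewrite vs.
by rewrite /ip a_eq; lra.
Qed.

End ConeComplementarity.

Section MixedReformulation.
Variable R : realType.
Variables (k l : nat) (A : 'M[R]_k) (B : 'M[R]_(k, l)) (C : 'M[R]_(l, k)).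
Variables (D : 'M[R]_l) (p : 'cV[R]_k) (q : 'cV[R]_l).

Lemma tr_evec_mul (y : 'cV[R]_k) : (evec R k)^T *m y = (\sum_i y i 0)%:M.
Proof.
apply/matrixP => i j; rewrite !ord1 !mxE.
by apply: eq_bigr => m _; rewrite !mxE mul1r.
Qed.

Lemma Ft1_shift x u t : Ft1 A B p (x - t *: evec R k) u t = F1 A B p x u.
Proof. by rewrite /Ft1 subrK. Qed.

Lemma Ft2_shift x u t :
  Ft2 A B C D p q (x - t *: evec R k) u t =
  col_mx (t *: F2 C D q x u + (\sum_i F1 A B p x u i 0) *: u)
         ((t ^+ 2 - enorm u ^+ 2)%:M).
Proof.
rewrite /Ft2 subrK; congr col_mx.
rewrite -[_ *: u]mul_mx_scalar -tr_evec_mul /F1 /F2.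
rewrite mulmxDl -scalemxAl -!mulmxA !mulmxDr !scalerDr.
by rewrite (AC ((2*2)*2)%AC ((1*5*6)*(2*3*4))%AC).
Qed.

Lemma mixed_problemE x u t :
  (let xt := x - t *: evec R k in
   Ft2 A B C D p q xt u t = 0 /\
   (forall i, 0 <= xt i 0) /\
   (forall i, 0 <= Ft1 A B p xt u t i 0) /\
   xt^T *m Ft1 A B p xt u t = 0) <->
  mixed_compl x (F1 A B p x u) u (F2 C D q x u) t.
Proof.
have xtE i : (x - t *: evec R k) i 0 = x i 0 - t by rewrite !mxE mulr1.
have dotE : (x - t *: evec R k)^T *m F1 A B p x u =
            (\sum_i (x i 0 - t) * F1 A B p x u i 0)%:M.
  rewrite [LHS]mx11_scalar mxE; congr _%:M.
  by apply: eq_bigr => i _; rewrite mxE xtE.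
rewrite /= Ft1_shift Ft2_shift dotE; split.
- case=> /eqP; rewrite col_mx_eq0 scalar_mx11_eq0 subr_eq0.
  case/andP=> /eqP/cV_eq0 top /eqP t2 [xt_ge0 [F1_ge0 /eqP]].
  rewrite scalar_mx11_eq0 => /eqP dot0; split=> // [j|i].
  + by have := top j; rewrite !mxE.
  + by rewrite -subr_ge0 -xtE.
- case=> top t2 xt F1_ge0 dot0; split.
    apply/eqP; rewrite col_mx_eq0 scalar_mx11_eq0 t2 subrr eqxx andbT.
    by apply/eqP/cV_eq0 => j; have := top j; rewrite !mxE.
  split; first by move=> i; rewrite xtE subr_ge0.
  by split=> //; apply/eqP; rewrite scalar_mx11_eq0 dot0.
Qed.

End MixedReformulation.

Theorem mainTheorem3 (R : realType) (d : measure_display) (Omega : measurableType d)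
  (P : probability Omega R) (k l : nat) (hk : (0 < k)%N) (hl : (0 < l)%N)
  (A : Omega -> 'M[R]_k) (B : Omega -> 'M[R]_(k, l))
  (C : Omega -> 'M[R]_(l, k)) (D : Omega -> 'M[R]_l)
  (p : Omega -> 'cV[R]_k) (q : Omega -> 'cV[R]_l)
  (mA : forall i j, measurable_fun setT (fun w => A w i j))
  (mB : forall i j, measurable_fun setT (fun w => B w i j))
  (mC : forall i j, measurable_fun setT (fun w => C w i j))
  (mD : forall i j, measurable_fun setT (fun w => D w i j))
  (mp : forall i j, measurable_fun setT (fun w => p w i j))
  (mq : forall i j, measurable_fun setT (fun w => q w i j))
  (x : 'cV[R]_k) (u : 'cV[R]_l)
  (hu : u != 0)
  (hCDq : forall w, F2 (C w) (D w) (q w) x u != 0) :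
  {ae P, forall w,
     inL x u /\
     inM (F1 (A w) (B w) (p w) x u) (F2 (C w) (D w) (q w) x u) /\
     ip x u (F1 (A w) (B w) (p w) x u) (F2 (C w) (D w) (q w) x u) = 0}
  <->
  exists t : R, 0 < t /\
    {ae P, forall w,
       let xt := x - t *: evec R k in
       Ft2 (A w) (B w) (C w) (D w) (p w) (q w) xt u t = 0 /\
       (forall i, 0 <= xt i 0) /\
       (forall i, 0 <= Ft1 (A w) (B w) (p w) xt u t i 0) /\
       xt^T *m Ft1 (A w) (B w) (p w) xt u t = 0}.
Proof.
split=> [cone_ae | [t [t_gt0 mixed_ae]]].
  exists (enorm u); split; first exact: enorm_gt0.
  apply: filterS cone_ae => w cone.
  by apply/mixed_problemE; exact: cone_compl_mixed.
apply: filterS mixed_ae => w /mixed_problemE.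
exact: mixed_compl_cone.
Qed.
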